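(* Consider the algorithm described in the context. Suppose: (i) $\|\hat H_k\|\leq\kappa_H$ for all $k$, some $\kappa_H\geq1$; (ii) $f$ is bounded below by $f_{\mathrm{low}}$, twice continuously differentiable with $L_H$-Lipschitz Hessian, and $\|\nabla^2 f(\mathbf{x}_k)\|\leq M$ for all $k$; (iii) every step satisfies $\hat{m}_k(\mathbf{0}) - \hat{m}_k(\hat{\mathbf{s}}_k) \geq \kappa_s \max\left(\|\hat{\mathbf{g}}_k\| \min\left(\Delta_k, \frac{\|\hat{\mathbf{g}}_k\|}{\max(\|\hat{H}_k\|,1)}\right), \hat{\tau}^m_k\Delta_k^2\right)$ for some $\kappa_s>0$ independent of $k$. Let $\epsilon>0$ with $\theta := (1-\alpha)^2 - \frac{4M(r-1)\alpha^2}{\epsilon(1-\alpha)^2}>0$, and let $K\geq0$. If $\sigma_k\geq\epsilon$ for all $k\leq K$, then $\#(\mathcal{A}\cap\mathcal{D}^C(\Delta)\cap\mathcal{U})=0$ for all $\Delta\leq c_2\epsilon$, where $$c_2:=\frac{\min(1-\alpha,(1-\alpha)^2,\theta)}{\kappa_\sigma+c_0^{-1}},\quad \kappa_\sigma:=\max(\kappa_{\mathrm{eg}}\Delta_{\max},\kappa_{\mathrm{eh}}),\quad c_0:=\min\left(\frac{1}{\mu},\frac{1}{\kappa_H},\frac{\kappa_s(1-\eta)}{\kappa_{\mathrm{ef}}\Delta_{\max}},\frac{\kappa_s(1-\eta)}{\kappa_{\mathrm{ef}}}\right).$$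
   Context: Algorithm: Let $f:\mathbb{R}^n\to\mathbb{R}$. Fix $\mathbf{x}_0$, $p\in\{1,\ldots,n\}$, $0<\Delta_0\leq\Delta_{\max}$, $0<\gamma_{\mathrm{dec}}<1<\gamma_{\mathrm{inc}}$, $\eta\in(0,1)$, $\mu>0$. For $k=0,1,\ldots$: select a random $P_k\in\mathbb{R}^{n\times p}$; build $\hat m_k(\hat{\mathbf{s}})=f(\mathbf{x}_k)+\hat{\mathbf{g}}_k^T\hat{\mathbf{s}}+\frac12\hat{\mathbf{s}}^T\hat H_k\hat{\mathbf{s}}$ ($\hat H_k$ symmetric) which is $P_k$-fully quadratic: constants $\kappa_{\mathrm{ef}},\kappa_{\mathrm{eg}},\kappa_{\mathrm{eh}}>0$ independent of $k$ with $|f(\mathbf{x}_k+P_k\hat{\mathbf{s}})-\hat m_k(\hat{\mathbf{s}})|\leq\kappa_{\mathrm{ef}}\Delta_k^3$, $\|P_k^T\nabla f(\mathbf{x}_k+P_k\hat{\mathbf{s}})-\nabla\hat m_k(\hat{\mathbf{s}})\|\leq\kappa_{\mathrm{eg}}\Delta_k^2$, $\|P_k^T\nabla^2 f(\mathbf{x}_k+P_k\hat{\mathbf{s}})P_k-\hat H_k\|\leq\kappa_{\mathrm{eh}}\Delta_k$ for all $\|\hat{\mathbf{s}}\|\leq\Delta_k$; compute a step $\hat{\mathbf{s}}_k$ with $\|\hat{\mathbf{s}}_k\|\leq\Delta_k$; let $R_k:=\frac{f(\mathbf{x}_k)-f(\mathbf{x}_k+P_k\hat{\mathbf{s}}_k)}{\hat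 m_k(\mathbf{0})-\hat m_k(\hat{\mathbf{s}}_k)}$, $\hat\tau^m_k:=\max(-\lambda_{\min}(\hat H_k),0)$, $\hat\sigma^m_k:=\max(\|\hat{\mathbf{g}}_k\|,\hat\tau^m_k)$; if $R_k\geq\eta$ and $\hat\sigma^m_k\geq\mu\Delta_k$ the iteration is successful: $\mathbf{x}_{k+1}=\mathbf{x}_k+P_k\hat{\mathbf{s}}_k$, $\Delta_{k+1}=\min(\gamma_{\mathrm{inc}}\Delta_k,\Delta_{\max})$; otherwise unsuccessful: $\mathbf{x}_{k+1}=\mathbf{x}_k$, $\Delta_{k+1}=\gamma_{\mathrm{dec}}\Delta_k$. Criticality: $\sigma_k:=\max(\|\nabla f(\mathbf{x}_k)\|,\max(-\lambda_{\min}(\nabla^2 f(\mathbf{x}_k)),0))$. Well-alignment: write $\nabla^2 f(\mathbf{x}_k)=\sum_{i=1}^r\lambda_i\mathbf{v}_i\mathbf{v}_i^T$, $\lambda_1\geq\cdots\geq\lambda_r$, $r=\operatorname{rank}(\nabla^2 f(\mathbf{x}_k))$, $\mathbf{v}_i$ orthonormal, $\hat{\mathbf{v}}_i:=P_k^T\mathbf{v}_i$; $P_k$ is well-aligned if $\|P_k\|\leq P_{\max}$, $\|P_k^T\nabla f(\mathbf{x}_k)\|\geq(1-\alpha)\|\nabla f(\mathbf{x}_k)\|$, $\|\hat{\mathbf{v}}_r\|\geq1-\alpha$, and $(\hat{\mathbf{v}}_i^T\hat{\mathbf{v}}_r)^2\leq4\alpha^2$ for $i=1,\ldots,r-1$,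 for fixed $\alpha\in(0,1)$, $P_{\max}>0$ independent of $k$. (The paper writes $r$ without an index $k$; $\theta$ is defined with this $r$.) Index sets, for fixed $K$: $\mathcal{A}$ = iterations in $\{0,\ldots,K\}$ at which $P_k$ is well-aligned; $\mathcal{U}$ = unsuccessful iterations in $\{0,\ldots,K\}$; $\mathcal{D}^C(\Delta)$ = iterations in $\{0,\ldots,K\}$ with $\Delta_k<\Delta$; $\#$ denotes cardinality. *)

From HB Require Import structures.
From mathcomp Require Import all_boot all_order all_algebra.
From mathcomp Require Import all_classical all_reals all_analysis.
Set Implicit Arguments. Unset Strict Implicit. Unset Printing Implicit Defensive.
Import Order.TTheory GRing.Theory Num.Theory.
Import numFieldNormedType.Exports.
Local Open Scope classical_set_scope.
Local Open Scope ring_scope.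

Section Defs.
Context {R : realType}.

Definition sc (A : 'M[R]_1) : R := A 0 0.

Definition enorm n (v : 'cV[R]_n) : R := Num.sqrt (\sum_(i < n) v i 0 ^+ 2).

Definition opnorm m n (A : 'M[R]_(m, n)) : R :=
  sup [set enorm (A *m y) | y in [set y : 'cV[R]_n | enorm y <= 1]].

Definition lmin n (A : 'M[R]_n) : R := inf [set a : R | eigenvalue A a].

Definition mhat p (f0 : R) (g : 'cV[R]_p) (H : 'M[R]_p) (s : 'cV[R]_p) : R :=
  f0 + sc (g^T *m s) + 2^-1 * sc (s^T *m H *m s).

Definition tau_m p (H : 'M[R]_p) : R := Num.max (- lmin H) 0.
Definition sigma_m p (g : 'cV[R]_p) (H : 'M[R]_p) : R := Num.max (enorm g) (tau_m H).

Definition crit n (gr : 'cV[R]_n) (Hs : 'M[R]_n) : R :=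
  Num.max (enorm gr) (Num.max (- lmin Hs) 0).

Definition tr_ratio n p (f : 'cV[R]_n -> R) (x : 'cV[R]_n) (P : 'M[R]_(n, p))
  (g : 'cV[R]_p) (H : 'M[R]_p) (s : 'cV[R]_p) : R :=
  (f x - f (x + P *m s)) / (mhat (f x) g H 0 - mhat (f x) g H s).

(* well-alignment; the eigenvectors v_1..v_r of the paper are v 0 .. v (r-1) *)
Definition well_aligned n p (Pmax alpha : R) (P : 'M[R]_(n, p)) (gr : 'cV[R]_n)
  (r : nat) (v : nat -> 'cV[R]_n) : Prop :=
  [/\ opnorm P <= Pmax,
      (1 - alpha) * enorm gr <= enorm (P^T *m gr),
      1 - alpha <= enorm (P^T *m v r.-1) &
      forall i, (i < r.-1)%N ->
        sc ((P^T *m v i)^T *m (P^T *m v r.-1)) ^+ 2 <= 4 * alpha ^+ 2].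

End Defs.

(* At a well-aligned iteration with sigma_k >= eps, the model criticality sigma^m_k is at least
   min(1 - alpha, theta) eps - kappa_sigma Delta_k.  If the gradient has norm >= eps, alignment
   passes a factor 1 - alpha of it to P_k^T grad f(x_k), which the model gradient matches up to
   kappa_eg Delta_k^2.  Otherwise the Hessian has a last eigenvalue lambda_r <= -eps; testing
   the model Hessian on u = P_k^T v_r, whose overlaps with the other P_k^T v_i are at most
   2 alpha, bounds its Rayleigh quotient by -theta eps + kappa_eh Delta_k.  When
   Delta_k <= c_2 eps this gives sigma^m_k >= Delta_k / c_0, which passes the criticality test
   and, comparing the Cauchy-type decrease (of order Delta_k^2 or Delta_k^3) with the model
   error kappa_ef Delta_k^3, also the ratio test R_k >= eta. *)

From HB Require Import structures.
From mathcomp Require Import all_boot all_order all_algebra.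
From mathcomp Require Import all_classical all_reals all_analysis.
From mathcomp Require Import complex.
From mathcomp.algebra_tactics Require Import ring lra.
Import Order.TTheory GRing.Theory Num.Theory.
Import numFieldNormedType.Exports.
Local Open Scope classical_set_scope.
Local Open Scope ring_scope.

Set Implicit Arguments. Unset Strict Implicit. Unset Printing Implicit Defensive.

Lemma sum_mul_sqr_le (R : realFieldType) (I : finType) (a b : I -> R) :
  (\sum_i a i * b i) ^+ 2 <= (\sum_i a i ^+ 2) * (\sum_i b i ^+ 2).
Proof.
set A := \sum_i a i ^+ 2; set B := \sum_i a i * b i; set C := \sum_i b i ^+ 2.
have A_ge0 : 0 <= A by apply: sumr_ge0 => i _; apply: sqr_ge0.
have C_ge0 : 0 <= C by apply: sumr_ge0 => i _; apply: sqr_ge0.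
have quad_ge0 t : 0 <= A * t ^+ 2 + B * (2 * t) + C.
  have -> : A * t ^+ 2 + B * (2 * t) + C = \sum_i (a i * t + b i) ^+ 2.
    by rewrite /A /B /C !mulr_suml -!big_split; apply: eq_bigr => i _ /=; ring.
  by apply: sumr_ge0 => i _; apply: sqr_ge0.
have [A_eq0 | A_gt0] := eqVneq A 0.
  have a_eq0 i : a i = 0.
    by apply/eqP; rewrite -sqrf_eq0; apply/eqP/(psumr_eq0P _ A_eq0) => // j _; apply: sqr_ge0.
  by rewrite /B big1 ?expr0n ?mulr_ge0 // => i _; rewrite a_eq0 mul0r.
rewrite -subr_ge0 (_ : A * C - B ^+ 2 = A * (A * (- (B / A)) ^+ 2 + B * (2 * - (B / A)) + C)).
  by rewrite mulr_ge0.
by field.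
Qed.

Section EuclideanGeometry.
Variable R : realType.

Definition vdot n (u v : 'cV[R]_n) : R := \sum_i u i 0 * v i 0.

Lemma sc_dot n (u v : 'cV[R]_n) : sc (u^T *m v) = vdot u v.
Proof. by rewrite /sc mxE; apply: eq_bigr => i _; rewrite mxE. Qed.

Lemma scB (A B : 'M[R]_1) : sc (A - B) = sc A - sc B.
Proof. by rewrite /sc !mxE. Qed.

Lemma vdotC n (u v : 'cV[R]_n) : vdot u v = vdot v u.
Proof. by apply: eq_bigr => i _; rewrite mulrC. Qed.

Lemma vdotDl n (u v w : 'cV[R]_n) : vdot (u + v) w = vdot u w + vdot v w.
Proof. by rewrite /vdot -big_split; apply: eq_bigr => i _; rewrite mxE mulrDl. Qed.

Lemma vdotZl n a (u w : 'cV[R]_n) : vdot (a *: u) w = a * vdot u w.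
Proof. by rewrite /vdot mulr_sumr; apply: eq_bigr => i _; rewrite mxE mulrA. Qed.

Lemma vdot_mulmxr m n (A : 'M[R]_(m, n)) u w : vdot u (A *m w) = vdot (A^T *m u) w.
Proof. by rewrite -!sc_dot trmx_mul trmxK mulmxA. Qed.

Lemma enorm_sq n (u : 'cV[R]_n) : enorm u ^+ 2 = vdot u u.
Proof.
rewrite sqr_sqrtr; last by apply: sumr_ge0 => i _; apply: sqr_ge0.
by apply: eq_bigr => i _; rewrite expr2.
Qed.

Lemma enorm_ge0 n (u : 'cV[R]_n) : 0 <= enorm u.
Proof. exact: sqrtr_ge0. Qed.

Lemma enorm0 n : enorm (0 : 'cV[R]_n) = 0.
Proof. by rewrite /enorm big1 ?sqrtr0 // => i _; rewrite mxE expr0n. Qed.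

Lemma enorm_eq0 n (u : 'cV[R]_n) : (enorm u == 0) = (u == 0).
Proof.
apply/idP/eqP => [|->]; last by rewrite enorm0.
rewrite sqrtr_eq0 le_eqVlt ltNge sumr_ge0 ?orbF => [/eqP u0|i _]; last exact: sqr_ge0.
apply/matrixP => i j; rewrite ord1 mxE; apply/eqP; rewrite -sqrf_eq0; apply/eqP.
by apply: (psumr_eq0P _ u0) => // k _; apply: sqr_ge0.
Qed.

Lemma enormZ n a (u : 'cV[R]_n) : enorm (a *: u) = `|a| * enorm u.
Proof.
rewrite /enorm -sqrtr_sqr -sqrtrM ?sqr_ge0 // mulr_sumr.
by congr Num.sqrt; apply: eq_bigr => i _; rewrite mxE exprMn.
Qed.

Lemma vdot_le n (u v : 'cV[R]_n) : `|vdot u v| <= enorm u * enorm v.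
Proof.
rewrite /enorm -sqrtrM; last by apply: sumr_ge0 => i _; apply: sqr_ge0.
rewrite -sqrtr_sqr ler_sqrt; first exact: sum_mul_sqr_le.
by apply: mulr_ge0; apply: sumr_ge0 => i _; apply: sqr_ge0.
Qed.

Lemma enormD n (u v : 'cV[R]_n) : enorm (u + v) <= enorm u + enorm v.
Proof.
rewrite -(ler_pXn2r (_ : 0 < 2)%N) ?nnegrE ?addr_ge0 ?enorm_ge0 //.
rewrite sqrrD !enorm_sq !vdotDl !(vdotC _ (u + v)) !vdotDl (vdotC v u).
have := le_trans (ler_norm (vdot u v)) (vdot_le u v); lra.
Qed.

Lemma frobenius_bound m n (A : 'M[R]_(m, n)) (y : 'cV[R]_n) :
  enorm (A *m y) <= Num.sqrt (\sum_i \sum_j A i j ^+ 2) * enorm y.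
Proof.
rewrite /enorm -sqrtrM; last by apply: sumr_ge0 => i _; apply: sumr_ge0 => j _; apply: sqr_ge0.
rewrite ler_sqrt; last first.
  apply: mulr_ge0; apply: sumr_ge0 => i _; rewrite ?sqr_ge0 //.
  by apply: sumr_ge0 => j _; apply: sqr_ge0.
rewrite mulr_suml; apply: ler_sum => i _; rewrite mxE; exact: sum_mul_sqr_le.
Qed.

Lemma opnorm_has_sup m n (A : 'M[R]_(m, n)) :
  has_sup [set enorm (A *m y) | y in [set y : 'cV[R]_n | enorm y <= 1]].
Proof.
split; first by exists 0, 0; rewrite /= ?mulmx0 enorm0 ?ler01.
exists (Num.sqrt (\sum_i \sum_j A i j ^+ 2)) => _ [y /= y_le1 <-].
by apply: le_trans (frobenius_bound A y) _; rewrite ler_piMr ?sqrtr_ge0.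
Qed.

Lemma opnorm_ge0 m n (A : 'M[R]_(m, n)) : 0 <= opnorm A.
Proof.
by apply: (sup_upper_bound (opnorm_has_sup A)); exists 0; rewrite /= ?mulmx0 enorm0 ?ler01.
Qed.

Lemma opnorm_mulmx_le m n (A : 'M[R]_(m, n)) (y : 'cV[R]_n) :
  enorm (A *m y) <= opnorm A * enorm y.
Proof.
have [y0 | y_neq0] := eqVneq y 0; first by rewrite y0 mulmx0 !enorm0 mulr0.
have y_gt0 : 0 < enorm y by rewrite lt_def enorm_eq0 y_neq0 enorm_ge0.
set z := (enorm y)^-1 *: y.
have z_le : enorm (A *m z) <= opnorm A.
  apply: (sup_upper_bound (opnorm_has_sup A)); exists z => //=.
  by rewrite enormZ ger0_norm ?invr_ge0 ?enorm_ge0 // mulVf ?gt_eqF.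
by move: z_le; rewrite -scalemxAr enormZ ger0_norm ?invr_ge0 ?enorm_ge0 // ler_pdivrMl // mulrC.
Qed.

Lemma quad_form_le n (A : 'M[R]_n) (u : 'cV[R]_n) :
  `|sc (u^T *m A *m u)| <= opnorm A * enorm u ^+ 2.
Proof.
rewrite -mulmxA sc_dot; apply: le_trans (vdot_le _ _) _.
by rewrite mulrC expr2 mulrA ler_wpM2r ?enorm_ge0 ?opnorm_mulmx_le.
Qed.

Lemma quad_form_le_compression m n (P : 'M[R]_(m, n)) (S : 'M[R]_m) (Hm : 'M[R]_n) u :
  sc (u^T *m Hm *m u) <=
  sc ((P *m u)^T *m S *m (P *m u)) + opnorm (P^T *m S *m P - Hm) * enorm u ^+ 2.
Proof.
set X := P^T *m S *m P - Hm.
have -> : sc (u^T *m Hm *m u) = sc ((P *m u)^T *m S *m (P *m u)) - sc (u^T *m X *m u).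
  by rewrite mulmxBr mulmxBl scB trmx_mul !mulmxA; ring.
have := quad_form_le X u; have := ler_norm (- sc (u^T *m X *m u)); rewrite normrN; lra.
Qed.

End EuclideanGeometry.

Lemma exists_mul_sum_le (C : numDomainType) (I : finType) (d w : I -> C) :
  (forall i, d i \is Num.real) -> (forall i, 0 <= w i) -> (exists i, w i != 0) ->
  exists i, d i * \sum_j w j <= \sum_j d j * w j.
Proof.
move=> d_real w_ge0 [i0 w_i0]; set N := \sum_j w j; set Q := \sum_j d j * w j.
have N_real : N \is Num.real by apply/ger0_real/sumr_ge0.
have Q_real : Q \is Num.real.
  by apply: rpred_sum => j _; apply: rpredM; [apply: d_real | apply/ger0_real/w_ge0].
case: (boolP [exists j, d j * N <= Q]) => [/existsP // | /existsPn Q_lt]; exfalso.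
have Q_lt_d j : 0 < d j * N - Q by rewrite subr_gt0 real_ltNge ?Q_lt // rpredM.
have sum_eq0 : \sum_j (d j * N - Q) * w j = 0.
  rewrite (eq_bigr (fun j => N * (d j * w j) - Q * w j)) => [|j _]; last by ring.
  by rewrite sumrB -!mulr_sumr -/N -/Q mulrC subrr.
have /eqP := psumr_eq0P (fun j _ => mulr_ge0 (ltW (Q_lt_d j)) (w_ge0 j)) sum_eq0 (i := i0) isT.
by rewrite mulf_eq0 (negPf w_i0) orbF (gt_eqF (Q_lt_d i0)).
Qed.

Section Rayleigh.
Local Open Scope sesquilinear_scope.

Lemma hermmx_eigenvalue_le_rayleigh (C : numClosedFieldType) n (A : 'M[C]_n) (u : 'rV[C]_n) :
  A \is hermsymmx -> u != 0 ->
  exists2 a, eigenvalue A a &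
    (a \is Num.real) && (a * (u *m u^t*) 0 0 <= (u *m A *m u^t*) 0 0).
Proof.
move=> A_herm u_neq0.
have /orthomx_spectralP A_eq := hermitian_normalmx A_herm.
have d_real := hermitian_spectral_diag_real A_herm.
set P := spectralmx A in A_eq; set d := spectral_diag A in A_eq d_real.
have P_unit : P \in unitmx by apply/unitarymx_unit/spectral_unitarymx.
have P_inv : invmx P = P^t* by apply/invmx_unitary/spectral_unitarymx.
set w := u *m P^t*.
have wP : w *m P = u by rewrite /w -mulmxA -P_inv mulVmx // mulmx1.
have w_tr : w^t* = P *m u^t* by rewrite /w trmx_mul map_mxM trmxCK.
have norm_eq : (u *m u^t*) 0 0 = \sum_i w 0 i * (w 0 i)^*.
  have -> : u *m u^t* = w *m w^t*.
    by rewrite w_tr /w mulmxA -(mulmxA u) -P_inv mulVmx // mulmx1.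
  by rewrite mxE; apply: eq_bigr => i _; rewrite !mxE.
have quad_eq : (u *m A *m u^t*) 0 0 = \sum_i d 0 i * (w 0 i * (w 0 i)^*).
  have -> : u *m A *m u^t* = w *m diag_mx d *m w^t* by rewrite A_eq P_inv w_tr /w !mulmxA.
  by rewrite mul_mx_diag mxE; apply: eq_bigr => i _; rewrite !mxE mulrCA mulrA.
have d_real' i : d 0 i \is Num.real by move/mxOverP: d_real; apply.
have w_neq0 : exists i, w 0 i * (w 0 i)^* != 0.
  case: (boolP [exists i, w 0 i * (w 0 i)^* != 0]) => [/existsP // | /existsPn w_eq0].
  move: u_neq0; rewrite -wP; suff -> : w = 0 by rewrite mul0mx eqxx.
  by apply/rowP => i; rewrite [RHS]mxE; have /negPn := w_eq0 i; rewrite mul_conjC_eq0 => /eqP.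
(* Some eigenvalue d_i lies below the Rayleigh quotient, a weighted mean of the d_i. *)
have [i d_i_le] := @exists_mul_sum_le _ _ (fun i => d 0 i) (fun i => w 0 i * (w 0 i)^*)
  d_real' (fun i => mul_conjC_ge0 (w 0 i)) w_neq0.
exists (d 0 i); last first.
  by rewrite norm_eq quad_eq d_i_le d_real'.
apply/eigenvalueP; exists (delta_mx 0 i *m P).
  rewrite [in LHS]A_eq !mulmxA mulmxK // scalemxAl; congr (_ *m _).
  apply/rowP => j; rewrite mul_mx_diag !mxE eqxx /=.
  by case: (j =P i) => [->|_]; rewrite ?mulr1 ?mul1r ?mulr0 ?mul0r.
apply/negP => /eqP delta_eq0.
have /matrixP/(_ 0 i) : delta_mx 0 i = 0 :> 'rV[C]_n.
  by rewrite -(mulmxK P_unit (delta_mx 0 i)) delta_eq0 mul0mx.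
by rewrite !mxE !eqxx => /eqP; rewrite oner_eq0.
Qed.

Lemma symmx_eigenvalue_le_rayleigh (F : rcfType) p (H : 'M[F]_p) (u : 'cV[F]_p) :
  H^T = H -> u != 0 ->
  exists2 a, eigenvalue H a & a * (u^T *m u) 0 0 <= (u^T *m H *m u) 0 0.
Proof.
(* The spectral theorem is only available over an algebraically closed field, so H is
   viewed as a Hermitian matrix over F[i]. *)
move=> H_sym u_neq0; pose f := real_complex F.
have H_herm : map_mx f H \is hermsymmx.
  apply: realsym_hermsym.
    by apply/is_hermitianmxP; rewrite expr0 scale1r map_mx_id // map_trmx H_sym.
  by apply/mxOverP => i j; rewrite mxE; apply/complex_realP; exists (H i j).
have uC_neq0 : map_mx f u^T != 0 by rewrite map_mx_eq0 trmx_eq0.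
have [a a_eig /andP[a_real a_le]] := hermmx_eigenvalue_le_rayleigh H_herm uC_neq0.
have uC_tr : (map_mx f u^T)^t* = map_mx f u.
  rewrite map_trmx trmxK -map_mx_comp; apply/matrixP => i j; rewrite !mxE /=.
  by apply: conj_Creal; apply/complex_realP; exists (u i j).
exists (complex.Re a).
  rewrite -(eigenvalue_map f); move: a_eig; congr (is_true (eigenvalue _ _)).
  exact/esym/(RRe_real a_real).
by move: a_le; rewrite uC_tr -!map_mxM !mxE -(RRe_real a_real) -rmorphM lecR.
Qed.

End Rayleigh.

Section SymmetricMatrices.
Variable R : realType.

Lemma eigenvalue_norm_le_opnorm p (H : 'M[R]_p) a :
  H^T = H -> eigenvalue H a -> `|a| <= opnorm H.
Proof.
move=> H_sym /eigenvalueP [w w_eig w_neq0].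
have Hw : H *m w^T = a *: w^T by rewrite -[H]H_sym -trmx_mul w_eig linearZ.
have w_gt0 : 0 < enorm w^T by rewrite lt_def enorm_eq0 trmx_eq0 w_neq0 enorm_ge0.
by have := opnorm_mulmx_le H w^T; rewrite Hw enormZ ler_pM2r.
Qed.

Lemma lmin_le_rayleigh p (H : 'M[R]_p) (u : 'cV[R]_p) :
  H^T = H -> lmin H * enorm u ^+ 2 <= sc (u^T *m H *m u).
Proof.
move=> H_sym; have [-> | u_neq0] := eqVneq u 0.
  by rewrite enorm0 expr0n mulr0 trmx0 !mul0mx /sc mxE.
have [b b_eig b_le] := symmx_eigenvalue_le_rayleigh H_sym u_neq0.
have lmin_le : lmin H <= b.
  apply: ge_inf b_eig; exists (- opnorm H) => a a_eig.
  by rewrite lerNl (le_trans _ (eigenvalue_norm_le_opnorm H_sym a_eig)) // -normrN ler_norm.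
rewrite enorm_sq -sc_dot; apply: le_trans b_le.
by rewrite ler_wpM2r // sc_dot -enorm_sq sqr_ge0.
Qed.

End SymmetricMatrices.

Section SpectralSums.
Variables (R : realType) (n : nat) (lam : nat -> R) (v : nat -> 'cV[R]_n).

Definition spectral_sum r : 'M[R]_n := \sum_(i < r) lam i *: (v i *m (v i)^T).

Definition orthonormal_vecs r : Prop :=
  forall i j, (i < r)%N -> (j < r)%N -> vdot (v i) (v j) = (i == j)%:R.

Lemma quad_spectral_sum r (a b : 'cV[R]_n) :
  sc (a^T *m spectral_sum r *m b) = \sum_(i < r) lam i * (vdot a (v i) * vdot (v i) b).
Proof.
rewrite /sc mulmx_sumr mulmx_suml summxE; apply: eq_bigr => i _.
rewrite -scalemxAr -scalemxAl mxE !mulmxA -[_ *m (v i)^T *m b]mulmxA mxE big_ord1.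
by rewrite -!sc_dot.
Qed.

Lemma trmx_spectral_sum r : (spectral_sum r)^T = spectral_sum r.
Proof.
rewrite /spectral_sum linear_sum; apply: eq_bigr => i _.
by rewrite linearZ /= trmx_mul trmxK.
Qed.

Lemma vdot_spectral_sum r j (c : 'cV[R]_n) : orthonormal_vecs r -> (j < r)%N ->
  vdot (v j) (spectral_sum r *m c) = lam j * vdot (v j) c.
Proof.
move=> orth j_lt; rewrite -sc_dot mulmxA quad_spectral_sum (bigD1 (Ordinal j_lt)) //=.
rewrite big1 ?addr0 => [|i /eqP i_neq]; first by rewrite orth // eqxx mul1r.
rewrite orth // (_ : (j == i) = false) ?mul0r ?mulr0 //.
by apply/eqP => j_eq; apply: i_neq; apply: val_inj.
Qed.

Lemma spectral_coef_le_opnorm r i : orthonormal_vecs r -> (i < r)%N ->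
  lam i <= opnorm (spectral_sum r).
Proof.
move=> orth i_lt; have := quad_form_le (spectral_sum r) (v i).
rewrite -mulmxA sc_dot vdot_spectral_sum // enorm_sq !orth // eqxx !mulr1.
exact: le_trans (ler_norm _).
Qed.

Lemma eigenvalue_spectral_sum r a : orthonormal_vecs r ->
  eigenvalue (spectral_sum r) a -> a = 0 \/ exists2 j, (j < r)%N & a = lam j.
Proof.
move=> orth /eigenvalueP [w w_eig w_neq0]; set c := w^T.
have Sc : spectral_sum r *m c = a *: c.
  by rewrite /c -trmx_spectral_sum -trmx_mul w_eig linearZ.
have coef_eq j : (j < r)%N -> (a - lam j) * vdot (v j) c = 0.
  move=> j_lt; rewrite mulrBl -(vdot_spectral_sum c orth j_lt) Sc.
  by rewrite (vdotC _ (a *: c)) vdotZl vdotC subrr.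
case: (boolP [exists j : 'I_r, vdot (v j) c != 0]) => [/existsP [j c_j] | /existsPn c_orth].
  right; exists j => //; apply/eqP; rewrite -subr_eq0.
  by have /eqP := coef_eq j (ltn_ord j); rewrite mulf_eq0 (negPf c_j) orbF.
have cc_neq0 : vdot c c != 0 by rewrite -enorm_sq sqrf_eq0 enorm_eq0 trmx_eq0.
left; have : a * vdot c c = 0.
  rewrite -vdotZl vdotC -Sc -sc_dot mulmxA quad_spectral_sum big1 // => j _.
  by have /negPn/eqP -> := c_orth j; rewrite !mulr0.
by move/eqP; rewrite mulf_eq0 (negPf cc_neq0) orbF => /eqP.
Qed.

Lemma lmin_spectral_sum_ge r : orthonormal_vecs r ->
  (forall i j, (i <= j)%N -> (j < r)%N -> lam j <= lam i) -> (0 < r)%N ->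
  Num.min (lam r.-1) 0 <= lmin (spectral_sum r).
Proof.
move=> orth sorted r_gt0; rewrite /lmin.
have [[a a_eig] | no_eig] := pselect (exists a, eigenvalue (spectral_sum r) a).
  apply: lb_le_inf; first by exists a.
  move=> b /(eigenvalue_spectral_sum orth) [-> | [j j_lt ->]]; rewrite ge_min ?lexx ?orbT //.
  by rewrite sorted // ?prednK // -ltnS prednK.
suff -> : [set a | eigenvalue (spectral_sum r) a] = set0 by rewrite inf0 ge_min lexx orbT.
by apply/seteqP; split => // a a_eig; apply: no_eig; exists a.
Qed.

Lemma quad_spectral_sum_le r (w : 'cV[R]_n) (M c : R) : 0 <= M ->
  (forall i, (i < r)%N -> lam i <= M) -> (forall i, (i < r)%N -> vdot (v i) w ^+ 2 <= c) ->
  sc (w^T *m spectral_sum r.+1 *m w) <= lam r * vdot (v r) w ^+ 2 + r%:R * (M * c).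
Proof.
move=> M_ge0 lam_le overlap_le.
rewrite quad_spectral_sum big_ord_recr /= addrC (vdotC w) -expr2 lerD2l.
apply: le_trans (_ : \sum_(i < r) M * c <= _); last by rewrite sumr_const card_ord mulr_natl.
apply: ler_sum => i _; rewrite (vdotC w) -expr2.
apply: le_trans (_ : M * vdot (v i) w ^+ 2 <= _); first by rewrite ler_wpM2r ?sqr_ge0 ?lam_le.
by rewrite ler_wpM2l ?overlap_le.
Qed.

End SpectralSums.

Section Criticality.
Variable R : realType.

Lemma crit_small_grad_lmin_le n (gr : 'cV[R]_n) (Hs : 'M[R]_n) eps :
  eps <= crit gr Hs -> enorm gr < eps -> 0 < eps -> lmin Hs <= - eps.
Proof.
rewrite /crit !le_max => /orP [gr_ge | /orP [| zero_ge]] gr_lt eps_gt0; last 2 first.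
- by rewrite lerNr.
- by move: (lt_le_trans eps_gt0 zero_ge); rewrite ltxx.
- by move: (lt_le_trans gr_lt gr_ge); rewrite ltxx.
Qed.

Lemma lmin_le_aligned n p r (lam : nat -> R) (v : nat -> 'cV[R]_n) (P : 'M[R]_(n, p))
    (Hm : 'M[R]_p) (a c eps M eh : R) :
  Hm^T = Hm -> opnorm (P^T *m spectral_sum lam v r.+1 *m P - Hm) <= eh ->
  0 <= M -> (forall i, (i < r)%N -> lam i <= M) -> 0 <= eps -> lam r <= - eps ->
  0 < a -> a <= enorm (P^T *m v r) -> 0 <= c ->
  (forall i, (i < r)%N -> vdot (P^T *m v i) (P^T *m v r) ^+ 2 <= c) ->
  lmin Hm <= - eps * a ^+ 2 + r%:R * (M * c) / a ^+ 2 + eh.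
Proof.
move=> Hm_sym Hm_err M_ge0 lam_le eps_ge0 lam_r a_gt0 a_le c_ge0 overlap.
set S := spectral_sum lam v r.+1; set u := P^T *m v r; set N := vdot u u.
have N_ge : a ^+ 2 <= N.
  by rewrite /N -enorm_sq !expr2; apply: ler_pM => //; apply: ltW.
have N_gt0 : 0 < N := lt_le_trans (exprn_gt0 2 a_gt0) N_ge.
have rayleigh : lmin Hm * N <= sc (u^T *m Hm *m u) by rewrite /N -enorm_sq lmin_le_rayleigh.
have model_err : sc (u^T *m Hm *m u) <= sc ((P *m u)^T *m S *m (P *m u)) + eh * N.
  have := quad_form_le_compression P S Hm u; rewrite enorm_sq -/N.
  have := ler_wpM2r (ltW N_gt0) Hm_err.
  lra.
have spectral : sc ((P *m u)^T *m S *m (P *m u)) <= lam r * N ^+ 2 + r%:R * (M * c).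
  have := quad_spectral_sum_le (v := v) (w := P *m u) M_ge0 lam_le (c := c).
  by rewrite vdot_mulmxr; apply => i i_lt; rewrite vdot_mulmxr overlap.
have lmin_le : lmin Hm <= - eps * N + r%:R * (M * c) / N + eh.
  rewrite -(ler_pM2r N_gt0).
  rewrite (_ : (- eps * N + r%:R * (M * c) / N + eh) * N
             = - eps * N ^+ 2 + r%:R * (M * c) + eh * N); last by field; rewrite gt_eqF.
  have : lam r * N ^+ 2 <= - eps * N ^+ 2 by rewrite ler_wpM2r ?sqr_ge0.
  lra.
have : r%:R * (M * c) / N <= r%:R * (M * c) / a ^+ 2.
  by rewrite ler_wpM2l ?mulr_ge0 // lef_pV2 ?posrE ?exprn_gt0.
have : - eps * N <= - eps * a ^+ 2 by rewrite !mulNr lerN2 ler_wpM2l.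
lra.
Qed.

Lemma sigma_m_ge_aligned n p r (gr : 'cV[R]_n) (lam : nat -> R) (v : nat -> 'cV[R]_n)
    (P : 'M[R]_(n, p)) (g : 'cV[R]_p) (Hm : 'M[R]_p) (Pmax alpha eps M m e eg eh : R) :
  (0 < r)%N -> orthonormal_vecs v r ->
  (forall i j, (i <= j)%N -> (j < r)%N -> lam j <= lam i) ->
  opnorm (spectral_sum lam v r) <= M ->
  well_aligned Pmax alpha P gr r v -> eps <= crit gr (spectral_sum lam v r) ->
  Hm^T = Hm -> enorm (P^T *m gr - g) <= eg ->
  opnorm (P^T *m spectral_sum lam v r *m P - Hm) <= eh ->
  alpha < 1 -> 0 < eps -> m <= 1 - alpha ->
  m <= (1 - alpha) ^+ 2 - 4 * M * (r%:R - 1) * alpha ^+ 2 / (eps * (1 - alpha) ^+ 2) ->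
  eg <= e -> eh <= e ->
  m * eps - e <= sigma_m g Hm.
Proof.
move=> r_gt0 orth sorted S_le [_ align_g align_v overlap] crit_ge Hm_sym g_err Hm_err
  alpha_lt1 eps_gt0 m_le m_le_theta eg_le eh_le.
have a_gt0 : 0 < 1 - alpha by rewrite subr_gt0.
rewrite /sigma_m le_max; have [gr_ge | gr_lt] := leP eps (enorm gr).
  have := enormD (P^T *m gr - g) g; rewrite subrK => tri.
  have := ler_wpM2l (ltW a_gt0) gr_ge.
  have : m * eps <= (1 - alpha) * eps by rewrite ler_pM2r.
  by move=> *; apply/orP; left; lra.
have lam_last : lam r.-1 <= - eps.
  have := lmin_spectral_sum_ge orth sorted r_gt0.
  move/le_trans/(_ (crit_small_grad_lmin_le crit_ge gr_lt eps_gt0)).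
  by rewrite ge_min => /orP [// | zero_le]; lra.
have [r' r_eq] : exists r', r = r'.+1 by exists r.-1; rewrite prednK.
subst r; move: m_le_theta; set theta := (_ - _) => m_le_theta.
have M_ge0 : 0 <= M := le_trans (opnorm_ge0 _) S_le.
have lam_le i : (i < r')%N -> lam i <= M.
  by move=> i_lt; apply: le_trans S_le; apply: spectral_coef_le_opnorm orth (ltnW i_lt).
have overlap' i : (i < r')%N -> vdot (P^T *m v i) (P^T *m v r') ^+ 2 <= 4 * alpha ^+ 2.
  by move=> i_lt; rewrite -sc_dot; apply: overlap.
have c_ge0 : 0 <= 4 * alpha ^+ 2 by apply: mulr_ge0; [lra | apply: sqr_ge0].
have := lmin_le_aligned Hm_sym Hm_err M_ge0 lam_le (ltW eps_gt0) lam_last a_gt0 align_v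
  c_ge0 overlap'.
have theta_eps : theta * eps
    = eps * (1 - alpha) ^+ 2 - r'%:R * (M * (4 * alpha ^+ 2)) / (1 - alpha) ^+ 2.
  by rewrite /theta -[r'.+1%:R]natr1 addrK; field; rewrite (gt_eqF a_gt0) (gt_eqF eps_gt0).
have : m * eps <= theta * eps by rewrite ler_pM2r.
move=> m_eps lmin_Hm; apply/orP; right; rewrite /tau_m le_max; apply/orP; left; lra.
Qed.
End Criticality.

Lemma model_decrease_ge (R : realFieldType) (ks kH Ci D G T opH dec : R) :
  0 < ks -> 0 < D -> opH <= kH -> 1 <= kH -> kH <= Ci ->
  ks * Num.max (G * Num.min D (G / Num.max opH 1)) (T * D ^+ 2) <= dec ->
  D * Ci <= Num.max G T ->
  ks * Ci * D ^+ 2 <= dec \/ ks * Ci * D ^+ 3 <= dec.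
Proof.
move=> ks_gt0 D_gt0 opH_le kH_ge1 kH_le dec_ge sigma_le.
have [G_ge | G_lt] := leP (D * Ci) G.
  have min_eq : Num.min D (G / Num.max opH 1) = D.
    apply/min_idPl; rewrite ler_pdivlMr ?lt_max ?ltr01 ?orbT //.
    apply: le_trans G_ge; rewrite ler_pM2l // ge_max (le_trans opH_le kH_le).
    exact: le_trans kH_ge1 kH_le.
  left; apply: le_trans dec_ge; rewrite -mulrA ler_pM2l // le_max min_eq.
  by rewrite expr2 mulrA ler_pM2r // mulrC G_ge.
have T_ge : D * Ci <= T.
  move: sigma_le; rewrite le_max => /orP [G_ge | //].
  by move: (lt_le_trans G_lt G_ge); rewrite ltxx.
right; apply: le_trans dec_ge; rewrite -mulrA ler_pM2l // le_max.
by rewrite (_ : Ci * D ^+ 3 = D * Ci * D ^+ 2) ?ler_pM2r ?exprn_gt0 ?T_ge ?orbT //; ring.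
Qed.

Lemma tr_ratio_ge (R : realType) n p (f : 'cV[R]_n -> R) x (P : 'M[R]_(n, p)) g Hm s
    (eta ks kef kH Dm Ci D : R) :
  eta < 1 -> 0 < ks -> 0 <= kef -> 0 < D -> D <= Dm ->
  opnorm Hm <= kH -> 1 <= kH -> kH <= Ci ->
  kef * Dm <= ks * (1 - eta) * Ci -> kef <= ks * (1 - eta) * Ci ->
  `|f (x + P *m s) - mhat (f x) g Hm s| <= kef * D ^+ 3 ->
  ks * Num.max (enorm g * Num.min D (enorm g / Num.max (opnorm Hm) 1)) (tau_m Hm * D ^+ 2)
    <= mhat (f x) g Hm 0 - mhat (f x) g Hm s ->
  D * Ci <= sigma_m g Hm ->
  eta <= tr_ratio f x P g Hm s.
Proof.
move=> eta_lt1 ks_gt0 kef_ge0 D_gt0 D_le Hm_le kH_ge1 kH_le kefD_le kef_le model_err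
  dec_ge sigma_ge.
rewrite /tr_ratio; set dec := mhat (f x) g Hm 0 - mhat (f x) g Hm s in dec_ge *.
have mhat0 : mhat (f x) g Hm 0 = f x.
  by rewrite /mhat /sc trmx0 !mul0mx !mulmx0 !mxE mulr0 !addr0.
have eta_ge : 0 <= 1 - eta by rewrite subr_ge0 ltW.
have [dec_gt0 err_le] : 0 < dec /\ kef * D ^+ 3 <= (1 - eta) * dec.
  have Ci_gt0 : 0 < Ci by lra.
  case: (model_decrease_ge ks_gt0 D_gt0 Hm_le kH_ge1 kH_le dec_ge sigma_ge) => dec_ge'.
    split; first by apply: lt_le_trans dec_ge'; rewrite !mulr_gt0 ?exprn_gt0.
    have := ler_wpM2r (sqr_ge0 D) kefD_le; have := ler_wpM2l eta_ge dec_ge'.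
    have : kef * D ^+ 3 <= kef * Dm * D ^+ 2.
      by rewrite (_ : kef * D ^+ 3 = kef * D * D ^+ 2) ?ler_pM2r ?exprn_gt0 ?ler_wpM2l //; ring.
    lra.
  split; first by apply: lt_le_trans dec_ge'; rewrite !mulr_gt0 ?exprn_gt0.
  have := ler_wpM2r (ltW (exprn_gt0 3 D_gt0)) kef_le; have := ler_wpM2l eta_ge dec_ge'.
  lra.
rewrite ler_pdivlMr // (_ : f x - f (x + P *m s) = dec - (f (x + P *m s) - mhat (f x) g Hm s)).
  by have := ler_norm (f (x + P *m s) - mhat (f x) g Hm s); lra.
by rewrite /dec mhat0; ring.
Qed.

Lemma iteration_successful (R : realType) n p (f : 'cV[R]_n -> R) x (P : 'M[R]_(n, p))
    g Hm s (eta mu ks kef kH Dm D : R) :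
  eta < 1 -> 0 < mu -> 0 < ks -> 0 < kef -> 1 <= kH -> 0 < D -> D <= Dm -> opnorm Hm <= kH ->
  `|f (x + P *m s) - mhat (f x) g Hm s| <= kef * D ^+ 3 ->
  ks * Num.max (enorm g * Num.min D (enorm g / Num.max (opnorm Hm) 1)) (tau_m Hm * D ^+ 2)
    <= mhat (f x) g Hm 0 - mhat (f x) g Hm s ->
  D * (Num.min (Num.min (mu^-1) (kH^-1))
         (Num.min (ks * (1 - eta) / (kef * Dm)) (ks * (1 - eta) / kef)))^-1
    <= sigma_m g Hm ->
  eta <= tr_ratio f x P g Hm s /\ mu * D <= sigma_m g Hm.
Proof.
set c0 := Num.min (Num.min mu^-1 _) _.
move=> eta_lt1 mu_gt0 ks_gt0 kef_gt0 kH_ge1 D_gt0 D_le Hm_le model_err dec_ge sigma_ge.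
have Dm_gt0 := lt_le_trans D_gt0 D_le.
have c0_gt0 : 0 < c0.
  by rewrite !lt_min !invr_gt0 mu_gt0 (lt_le_trans ltr01 kH_ge1) !divr_gt0 ?mulr_gt0 ?subr_gt0.
have c0_le a b : 0 < a -> c0 <= b / a -> a <= b / c0.
  by move=> a_gt0; rewrite !ler_pdivlMr // mulrC.
have mu_le : mu <= c0^-1 by rewrite -div1r c0_le // div1r !ge_min lexx.
have kH_le : kH <= c0^-1.
  by rewrite -div1r c0_le ?(lt_le_trans ltr01) // div1r !ge_min lexx orbT.
have kefD_le : kef * Dm <= ks * (1 - eta) * c0^-1.
  by rewrite c0_le ?mulr_gt0 // !ge_min lexx orbT.
have kef_le : kef <= ks * (1 - eta) * c0^-1 by rewrite c0_le // !ge_min lexx !orbT.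
split; last by apply: le_trans sigma_ge; rewrite [leRHS]mulrC ler_pM2r.
exact: tr_ratio_ge eta_lt1 ks_gt0 (ltW kef_gt0) D_gt0 D_le Hm_le kH_ge1 kH_le kefD_le kef_le
  model_err dec_ge sigma_ge.
Qed.

Lemma trust_radius_bounds (R : realFieldType) (Delta : nat -> R) (Dm gdec ginc : R) :
  0 < Delta 0 -> Delta 0 <= Dm -> 0 < gdec -> gdec <= 1 -> 0 < ginc ->
  (forall k, Delta k.+1 = Num.min (ginc * Delta k) Dm \/ Delta k.+1 = gdec * Delta k) ->
  forall k, 0 < Delta k /\ Delta k <= Dm.
Proof.
move=> D0_gt0 D0_le gdec_gt0 gdec_le1 ginc_gt0 update; elim=> [// | k [Dk_gt0 Dk_le]].
have Dm_gt0 := lt_le_trans Dk_gt0 Dk_le.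
case: (update k) => ->; first by rewrite lt_min ge_min mulr_gt0 // Dm_gt0 lexx orbT.
by split; [apply: mulr_gt0 | apply: le_trans Dk_le; rewrite ler_piMl // ltW].
Qed.

Unset Implicit Arguments. Set Strict Implicit.

Theorem lemma3p11 (R : realType) (n p : nat)
  (f : 'cV[R]_n -> R) (gf : 'cV[R]_n -> 'cV[R]_n) (Hf : 'cV[R]_n -> 'M[R]_n)
  (x : nat -> 'cV[R]_n) (Delta : nat -> R) (P : nat -> 'M[R]_(n, p))
  (g : nat -> 'cV[R]_p) (H : nat -> 'M[R]_p) (s : nat -> 'cV[R]_p)
  (Deltamax gdec ginc eta mu kef keg keh kH flow LH M ks alpha Pmax eps : R)
  (r K : nat) (lam : nat -> nat -> R) (v : nat -> nat -> 'cV[R]_n) :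
  (* algorithm parameters *)
  (0 < p)%N -> (p <= n)%N ->
  0 < Delta 0 -> Delta 0 <= Deltamax ->
  0 < gdec -> gdec < 1 -> 1 < ginc ->
  0 < eta -> eta < 1 -> 0 < mu ->
  (* the function: gradient gf, Hessian Hf; C^2, L_H-Lipschitz Hessian, bounded below *)
  (forall y, differentiable f y /\
     ('d f y : 'cV[R]_n -> R) = (fun h => sc ((gf y)^T *m h))) ->
  (forall y, differentiable gf y /\
     ('d gf y : 'cV[R]_n -> 'cV[R]_n) = (fun h => Hf y *m h)) ->
  continuous Hf ->
  (forall y z, opnorm (Hf y - Hf z) <= LH * enorm (y - z)) ->
  (forall y, flow <= f y) ->
  (forall k, opnorm (Hf (x k)) <= M) ->
  (* models: symmetric, P_k-fully quadratic, bounded Hessians *)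
  0 < kef -> 0 < keg -> 0 < keh ->
  (forall k, (H k)^T = H k) ->
  (forall k sh, enorm sh <= Delta k ->
     [/\ `| f (x k + P k *m sh) - mhat (f (x k)) (g k) (H k) sh | <= kef * Delta k ^+ 3,
         enorm ((P k)^T *m gf (x k + P k *m sh) - (g k + H k *m sh)) <= keg * Delta k ^+ 2 &
         opnorm ((P k)^T *m Hf (x k + P k *m sh) *m P k - H k) <= keh * Delta k]) ->
  1 <= kH -> (forall k, opnorm (H k) <= kH) ->
  (* steps *)
  (forall k, enorm (s k) <= Delta k) ->
  0 < ks ->
  (forall k, mhat (f (x k)) (g k) (H k) 0 - mhat (f (x k)) (g k) (H k) (s k) >=
     ks * Num.max (enorm (g k) * Num.min (Delta k) (enorm (g k) / Num.max (opnorm (H k)) 1))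
                  (tau_m (H k) * Delta k ^+ 2)) ->
  (* iterate updates *)
  (forall k,
     if (eta <= tr_ratio f (x k) (P k) (g k) (H k) (s k)) && (mu * Delta k <= sigma_m (g k) (H k))
     then x k.+1 = x k + P k *m s k /\ Delta k.+1 = Num.min (ginc * Delta k) Deltamax
     else x k.+1 = x k /\ Delta k.+1 = gdec * Delta k) ->
  (* eigendecompositions of the Hessians at the iterates, of rank r *)
  (0 < r)%N ->
  (forall k, (k <= K)%N ->
     [/\ Hf (x k) = \sum_(i < r) lam k i *: (v k i *m (v k i)^T),
         \rank (Hf (x k)) = r,
         (forall i j, (i < r)%N -> (j < r)%N -> sc ((v k i)^T *m v k j) = (i == j)%:R) &
         (forall i j, (i <= j)%N -> (j < r)%N -> lam k j <= lam k i)]) ->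
  (* well-alignment constants *)
  0 < alpha -> alpha < 1 -> 0 < Pmax ->
  (* criticality *)
  0 < eps ->
  let theta := (1 - alpha) ^+ 2
               - 4 * M * (r%:R - 1) * alpha ^+ 2 / (eps * (1 - alpha) ^+ 2) in
  0 < theta ->
  (forall k, (k <= K)%N -> eps <= crit (gf (x k)) (Hf (x k))) ->
  let c0 := Num.min (Num.min (mu^-1) (kH^-1))
              (Num.min (ks * (1 - eta) / (kef * Deltamax)) (ks * (1 - eta) / kef)) in
  let ksigma := Num.max (keg * Deltamax) keh in
  let c2 := Num.min (Num.min (1 - alpha) ((1 - alpha) ^+ 2)) theta / (ksigma + c0^-1) in
  forall D, D <= c2 * eps ->
    [set k : nat | [/\ (k <= K)%N,
        well_aligned Pmax alpha (P k) (gf (x k)) r (v k),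
        ~ ((eta <= tr_ratio f (x k) (P k) (g k) (H k) (s k)) /\ (mu * Delta k <= sigma_m (g k) (H k))) &
        Delta k < D]] = set0.
Proof.
move=> _ _ D0_gt0 D0_le gdec_gt0 gdec_lt1 ginc_gt1 _ eta_lt1 mu_gt0 _ _ _ _ _ Hf_le
  kef_gt0 keg_gt0 keh_gt0 H_sym fully_quad kH_ge1 H_le s_le ks_gt0 decrease update r_gt0
  eig alpha_gt0 alpha_lt1 _ eps_gt0 theta _ crit_ge c0 ksigma c2 D D_le.
have Delta_bnd : forall k, 0 < Delta k /\ Delta k <= Deltamax.
  apply: trust_radius_bounds D0_gt0 D0_le gdec_gt0 (ltW gdec_lt1) (lt_trans ltr01 ginc_gt1) _.
  by move=> k; have := update k; case: ifP => _ [_ ->]; [left | right].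
set m := Num.min (Num.min (1 - alpha) ((1 - alpha) ^+ 2)) theta.
apply/seteqP; split => [k [k_le aligned unsuccessful D_lt] | //]; apply: unsuccessful.
have [Dk_gt0 Dk_le] := Delta_bnd k.
have [model_err _ _] := fully_quad k (s k) (s_le k).
have zero_le : enorm (0 : 'cV[R]_p) <= Delta k by rewrite enorm0 ltW.
have [_ g_err H_err] := fully_quad k 0 zero_le.
have [Hf_eq _ orth sorted] := eig k k_le.
rewrite !mulmx0 !addr0 Hf_eq in g_err H_err.
have orth' : orthonormal_vecs (v k) r by move=> i j i_lt j_lt; rewrite -sc_dot orth.
have S_le : opnorm (spectral_sum (lam k) (v k) r) <= M by rewrite /spectral_sum -Hf_eq.
have crit_k := crit_ge k k_le; rewrite Hf_eq in crit_k.
have eg_le : keg * Delta k ^+ 2 <= ksigma * Delta k.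
  by rewrite expr2 mulrA ler_pM2r // /ksigma le_max ler_pM2l ?Dk_le.
have eh_le : keh * Delta k <= ksigma * Delta k by rewrite ler_pM2r // /ksigma le_max lexx orbT.
have sigma_ge : m * eps - ksigma * Delta k <= sigma_m (g k) (H k).
  apply: sigma_m_ge_aligned r_gt0 orth' sorted S_le aligned crit_k (H_sym k) g_err H_err
    alpha_lt1 eps_gt0 _ _ eg_le eh_le; first by rewrite /m !ge_min lexx.
  by rewrite /m ge_min lexx orbT.
have Dk_sigma : Delta k * c0^-1 <= sigma_m (g k) (H k).
  have c0_gt0 : 0 < c0.
    rewrite !lt_min !invr_gt0 mu_gt0 (lt_le_trans ltr01 kH_ge1) !divr_gt0 ?mulr_gt0 ?subr_gt0 //.
    exact: lt_le_trans Dk_gt0 Dk_le.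
  have K_gt0 : 0 < ksigma + c0^-1 by rewrite addr_gt0 ?invr_gt0 // /ksigma lt_max keh_gt0 orbT.
  have : Delta k * (ksigma + c0^-1) <= m * eps.
    by rewrite -ler_pdivlMr // -mulrAC; exact: le_trans (ltW D_lt) D_le.
  lra.
exact: iteration_successful eta_lt1 mu_gt0 ks_gt0 kef_gt0 kH_ge1 Dk_gt0 Dk_le (H_le k)
  model_err (decrease k) Dk_sigma.
Qed.
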